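(* Let $\mu>1$, $\gamma=\mu\gamma_1^N$, $\rho\in(0,1)$, $0<\alpha<1/4$, $\rho_k=4k^\alpha$. There exist constants $A_5<\infty$ and $\delta_0>0$ such that for all $N\ge3$, all $0<\delta<\delta_0$ and all $z\in\widehat C_\delta$, $$\Big|\widetilde G_N(z)-\Big(-\tfrac12z_0^2+\tfrac14z_0^4+\tfrac12\sum_{k=1}^{N-1}\lambda_{k,N}|z_k|^2+\tfrac32 z_0^2\sum_{k=1}^{N-1}|z_k|^2\Big)\Big|\le A_5\delta^3,$$ where $\widehat C_\delta=\{z\in\widehat{\mathbb{R}}^N: z_0\in(-1+\rho,1-\rho),\ |z_k|\le\delta r_{k,N}/\sqrt{\lambda_{k,N}}\ \text{for }1\le k\le N-1\}$.
   Context: Indices modulo $N$; $F_{\gamma,N}(x)=\sum_{i=0}^{N-1}(\tfrac14x_i^4-\tfrac12x_i^2)+\tfrac\gamma4\sum_{i=0}^{N-1}(x_i-x_{i+1})^2$; $\gamma_1^N=\frac1{2\sin^2(\pi/N)}$; $G_N=N^{-1}F_{\gamma,N}$; $\lambda_{k,N}=-1+2\gamma\sin^2(k\pi/N)$ (positive for $1\le k\le N-1$ when $\gamma>\gamma_1^N$). $\omega=e^{2\pi i/N}$; $\widehat{\mathbb{R}}^N=\{z\in\mathbb{C}^N:z_k=\overline{z_{N-k}}\}$; $x_j(Nz)=\sum_k\omega^{jk}z_k$; $\widetilde G_N(z)=G_N(x(Nz))$. $r_{k,N}=r_{N-k,N}=\rho_k$ for $1\le k\le\lfloor N/2\rfloor$.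 *)

From Stdlib Require Import Reals Lra Lia Arith.
Open Scope R_scope.

Fixpoint rsum (n : nat) (f : nat -> R) : R :=
  match n with
  | O => 0
  | S m => rsum m f + f m
  end.

Definition F_N (N : nat) (gamma : R) (x : nat -> R) : R :=
  rsum N (fun i => / 4 * x i ^ 4 - / 2 * x i ^ 2)
  + gamma / 4 * rsum N (fun i => (x i - x ((i + 1) mod N)%nat) ^ 2).

Definition G_N (N : nat) (gamma : R) (x : nat -> R) : R := / INR N * F_N N gamma x.

Definition gamma1 (N : nat) : R := / (2 * sin (PI / INR N) ^ 2).

Definition lambda (gamma : R) (k N : nat) : R :=
  -1 + 2 * gamma * sin (INR k * PI / INR N) ^ 2.

(* A complex vector z in C^N is represented by real parts a and imaginary
   parts b (only indices 0..N-1 matter).  z in \hat R^N: z_k = conj z_{N-k}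
   (indices mod N). *)
Definition in_hatR (N : nat) (a b : nat -> R) : Prop :=
  forall k : nat, (k < N)%nat ->
    a k = a ((N - k) mod N)%nat /\ b k = - b ((N - k) mod N)%nat.

Definition cmod (ak bk : R) : R := sqrt (ak ^ 2 + bk ^ 2).

(* x_j = sum_k omega^{jk} z_k, omega = exp(2 pi i / N); real part written out
   (the imaginary part vanishes for z in \hat R^N). *)
Definition xfour (N : nat) (a b : nat -> R) (j : nat) : R :=
  rsum N (fun k =>
    a k * cos (2 * PI * INR j * INR k / INR N)
    - b k * sin (2 * PI * INR j * INR k / INR N)).

Definition Gtilde (N : nat) (gamma : R) (a b : nat -> R) : R :=
  G_N N gamma (xfour N a b).

(* rho_k = 4 k^alpha, r_{k,N} = r_{N-k,N} = rho_k for 1 <= k <= floor(N/2) *)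
Definition rho_k (alpha : R) (k : nat) : R := 4 * Rpower (INR k) alpha.
Definition r_kN (alpha : R) (k N : nat) : R := rho_k alpha (Nat.min k (N - k)).

From Stdlib Require Import Reals Lra Lia Arith.
Open Scope R_scope.

(* Write [x_j = z_0 + y_j], where [y] is the transform of the modes [k <> 0].
   1. Exact identity ([error_identity]): orthogonality of the characters of Z/NZ
      gives [sum_j y_j = 0] and Parseval's identity, and the discrete gradient is the
      Fourier multiplier [1 - omega^k] of modulus [2 sin (k pi / N)]; hence the error
      is exactly the mean of [z_0 y_j^3 + y_j^4 / 4].
   2. Spectral gap ([lambda_lower_bound]): [lambda_{k,N} >= (mu - 1) d^2 / 9] with
      [d = min (k, N - k)], so [|z_k| <= C delta 2^((m+1) alpha) / 2^m] on the dyadic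
      block [2^m <= d < 2^(m+1)] ([mode_block_bound]).
   3. Dyadic L^4 estimate ([fluct_fourth_bound]): the part of [y] carried by block [m]
      has at most [2^(m+1)] modes, which bounds its sup norm (triangle inequality)
      and its L^2 norm (Parseval); their product bounds its L^4 norm by
      [delta^4 (2^(4 alpha) / 2)^m], geometrically decaying because [alpha < 1/4].
      Hölder's inequality with geometric weights sums the blocks.
   4. Pointwise, [|z_0 y^3 + y^4 / 4| <= (1 / delta + 1 / 4) y^4 + delta^3] for
      [|z_0| <= 1] ([cubic_quartic_mean_bound]), which concludes. *)

Lemma rsum_S n f : rsum (S n) f = rsum n f + f n.
Proof. reflexivity. Qed.

Lemma rsum_ext n f g :
  (forall k, (k < n)%nat -> f k = g k) -> rsum n f = rsum n g.
Proof.
  induction n as [|n IH]; intros Hfg; simpl; [reflexivity|].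
  rewrite IH, (Hfg n) by (intros; try apply Hfg; lia); reflexivity.
Qed.

Lemma rsum_plus n f g : rsum n (fun k => f k + g k) = rsum n f + rsum n g.
Proof. induction n as [|n IH]; simpl; [ring|]. rewrite IH; ring. Qed.

Lemma rsum_minus n f g : rsum n (fun k => f k - g k) = rsum n f - rsum n g.
Proof. induction n as [|n IH]; simpl; [ring|]. rewrite IH; ring. Qed.

Lemma rsum_scal n c f : rsum n (fun k => c * f k) = c * rsum n f.
Proof. induction n as [|n IH]; simpl; [ring|]. rewrite IH; ring. Qed.

Lemma rsum_const n c : rsum n (fun _ => c) = INR n * c.
Proof. induction n as [|n IH]; [simpl; ring|]. rewrite rsum_S, IH, S_INR; ring. Qed.

Lemma rsum_le n f g :
  (forall k, (k < n)%nat -> f k <= g k) -> rsum n f <= rsum n g.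
Proof.
  induction n as [|n IH]; intros Hfg; simpl; [lra|].
  assert (rsum n f <= rsum n g) by (apply IH; intros; apply Hfg; lia).
  assert (f n <= g n) by (apply Hfg; lia). lra.
Qed.

Lemma rsum_nonneg n f : (forall k, (k < n)%nat -> 0 <= f k) -> 0 <= rsum n f.
Proof.
  intros Hf. replace 0 with (rsum n (fun _ => 0)) by (rewrite rsum_const; ring).
  now apply rsum_le.
Qed.

Lemma rsum_abs n f : Rabs (rsum n f) <= rsum n (fun k => Rabs (f k)).
Proof.
  induction n as [|n IH]; simpl; [rewrite Rabs_R0; lra|].
  eapply Rle_trans; [apply Rabs_triang|]. lra.
Qed.

Lemma rsum_swap n m f :
  rsum n (fun i => rsum m (fun j => f i j)) = rsum m (fun j => rsum n (fun i => f i j)).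
Proof.
  induction n as [|n IH]; simpl.
  - rewrite rsum_const; ring.
  - rewrite IH, rsum_plus; reflexivity.
Qed.

Lemma rsum_mul n m f g :
  rsum n f * rsum m g = rsum n (fun i => rsum m (fun j => f i * g j)).
Proof.
  induction n as [|n IH]; simpl; [ring|].
  rewrite Rmult_plus_distr_r, IH, rsum_scal; reflexivity.
Qed.

Lemma rsum_pick n i f :
  (i < n)%nat -> rsum n (fun k => if Nat.eqb k i then f k else 0) = f i.
Proof.
  induction n as [|n IH]; intros Hi; [lia|]. rewrite rsum_S.
  destruct (Nat.eq_dec i n) as [->|Hne].
  - rewrite Nat.eqb_refl, (rsum_ext _ _ (fun _ => 0)), rsum_const; [ring|].
    intros k Hk. destruct (Nat.eqb_spec k n); [lia|reflexivity].
  - rewrite IH by lia. destruct (Nat.eqb_spec n i); [lia|ring].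
Qed.

Lemma rsum_geom_le n x : 0 <= x < 1 -> rsum n (fun m => x ^ m) <= / (1 - x).
Proof.
  intros Hx.
  assert (Hgeom : rsum n (fun m => x ^ m) * (1 - x) = 1 - x ^ n).
  { induction n as [|n IH]; simpl; [ring|].
    rewrite Rmult_plus_distr_r, IH; ring. }
  assert (0 <= x ^ n) by (apply pow_le; lra).
  apply (Rmult_le_reg_r (1 - x)); [lra|]. rewrite Hgeom, Rinv_l; lra.
Qed.

Lemma rsum_count_interval n lo hi : (lo <= hi)%nat ->
  rsum n (fun k => if andb (Nat.leb lo k) (Nat.ltb k hi) then 1 else 0)
  <= INR (hi - lo).
Proof.
  intros Hlo.
  assert (Hcount : forall c,
    rsum n (fun k => if Nat.ltb k c then 1 else 0) = INR (Nat.min n c)).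
  { intros c. induction n as [|n IH]; [reflexivity|].
    rewrite rsum_S, IH. destruct (Nat.ltb_spec n c).
    - replace (Nat.min (S n) c) with (S (Nat.min n c)) by lia. rewrite S_INR; ring.
    - replace (Nat.min (S n) c) with (Nat.min n c) by lia. ring. }
  rewrite (rsum_ext _ _ (fun k =>
    (if Nat.ltb k hi then 1 else 0) - (if Nat.ltb k lo then 1 else 0))).
  - rewrite rsum_minus, !Hcount, <- minus_INR by lia. apply le_INR. lia.
  - intros k _. destruct (Nat.leb_spec lo k), (Nat.ltb_spec k hi), (Nat.ltb_spec k lo);
      simpl; lra || lia.
Qed.

Lemma nonneg_quadratic_discr A B S :
  0 <= B -> (forall t, 0 <= B * t ^ 2 - 2 * S * t + A) -> S ^ 2 <= A * B.
Proof.
  intros HB Hq. destruct (Req_dec B 0) as [HB0|HB0].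
  - destruct (Req_dec S 0) as [HS0|HS0]; [subst; nra|].
    exfalso. specialize (Hq ((A + 1) / (2 * S))). rewrite HB0 in Hq.
    replace (0 * ((A + 1) / (2 * S)) ^ 2 - 2 * S * ((A + 1) / (2 * S)) + A)
      with (-1) in Hq by (field; exact HS0). lra.
  - specialize (Hq (S / B)).
    replace (B * (S / B) ^ 2 - 2 * S * (S / B) + A) with (A - S ^ 2 / B) in Hq
      by (field; exact HB0).
    apply (Rmult_le_compat_r B) in Hq; [|lra].
    replace ((A - S ^ 2 / B) * B) with (A * B - S ^ 2) in Hq by (field; exact HB0). lra.
Qed.

Lemma cauchy_schwarz_weighted n (w y : nat -> R) :
  (forall k, (k < n)%nat -> 0 < w k) ->
  (rsum n y) ^ 2 <= rsum n (fun k => / w k) * rsum n (fun k => w k * y k ^ 2).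
Proof.
  intros Hw. apply nonneg_quadratic_discr.
  - apply rsum_nonneg. intros k Hk. specialize (Hw k Hk). nra.
  - intros t.
    assert (Hsq : 0 <= rsum n (fun k => / w k * (w k * y k * t - 1) ^ 2)).
    { apply rsum_nonneg. intros k Hk.
      apply Rmult_le_pos; [left; apply Rinv_0_lt_compat, Hw, Hk | apply pow2_ge_0]. }
    rewrite (rsum_ext _ _ (fun k => t ^ 2 * (w k * y k ^ 2) + (-2 * t) * y k + / w k))
      in Hsq.
    + rewrite !rsum_plus, !rsum_scal in Hsq. lra.
    + intros k Hk. specialize (Hw k Hk). field. lra.
Qed.

Lemma holder_fourth n (w Y : nat -> R) :
  (forall k, (k < n)%nat -> 0 < w k) ->
  (rsum n Y) ^ 4
  <= rsum n (fun k => / w k) ^ 3 * rsum n (fun k => w k ^ 3 * Y k ^ 4).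
Proof.
  intros Hw. set (W := rsum n (fun k => / w k)).
  set (S2 := rsum n (fun k => w k * Y k ^ 2)).
  assert (HW : 0 <= W).
  { apply rsum_nonneg. intros k Hk. left. apply Rinv_0_lt_compat, Hw, Hk. }
  assert (HS2 : 0 <= S2).
  { apply rsum_nonneg. intros k Hk. specialize (Hw k Hk). nra. }
  assert (Hfirst : rsum n Y ^ 2 <= W * S2) by now apply cauchy_schwarz_weighted.
  assert (Hsecond : S2 ^ 2 <= W * rsum n (fun k => w k ^ 3 * Y k ^ 4)).
  { replace (rsum n (fun k => w k ^ 3 * Y k ^ 4))
      with (rsum n (fun k => w k * (w k * Y k ^ 2) ^ 2))
      by (apply rsum_ext; intros; ring).
    now apply cauchy_schwarz_weighted. }
  assert (rsum n Y ^ 4 <= (W * S2) ^ 2).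
  { replace (rsum n Y ^ 4) with ((rsum n Y ^ 2) ^ 2) by ring.
    apply pow_incr. split; [apply pow2_ge_0|exact Hfirst]. }
  assert (W ^ 2 * S2 ^ 2 <= W ^ 2 * (W * rsum n (fun k => w k ^ 3 * Y k ^ 4)))
    by (apply Rmult_le_compat_l; [apply pow2_ge_0|exact Hsecond]).
  nra.
Qed.

Lemma holder_fourth_geometric n (Y : nat -> R) rho : 0 < rho < 1 ->
  (rsum n Y) ^ 4 <= (/ (1 - rho)) ^ 3 * rsum n (fun m => (/ rho ^ m) ^ 3 * Y m ^ 4).
Proof.
  intros Hrho.
  assert (Hw : forall m, (m < n)%nat -> 0 < / rho ^ m)
    by (intros; apply Rinv_0_lt_compat, pow_lt; lra).
  eapply Rle_trans; [apply (holder_fourth n (fun m => / rho ^ m) Y Hw)|].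
  apply Rmult_le_compat_r.
  - apply rsum_nonneg. intros m Hm. apply Rmult_le_pos.
    + apply pow_le. left. apply Hw, Hm.
    + replace (Y m ^ 4) with ((Y m ^ 2) ^ 2) by ring. apply pow2_ge_0.
  - apply pow_incr. split.
    + apply rsum_nonneg. intros m Hm. left. apply Rinv_0_lt_compat, Hw, Hm.
    + rewrite (rsum_ext _ _ (fun m => rho ^ m)) by (intros; apply Rinv_inv).
      apply rsum_geom_le. lra.
Qed.

Definition angle (N j k : nat) : R := 2 * PI * INR j * INR k / INR N.

Definition mode (N : nat) (a b : nat -> R) (j k : nat) : R :=
  a k * cos (angle N j k) - b k * sin (angle N j k).

Lemma xfour_modes N a b j : xfour N a b j = rsum N (mode N a b j).
Proof. reflexivity. Qed.

Lemma angle_add N j k l : angle N j (k + l) = angle N j k + angle N j l.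
Proof. unfold angle. rewrite plus_INR. unfold Rdiv. ring. Qed.

Lemma angle_succ N j k : angle N (S j) k = angle N j k + angle N 1 k.
Proof. unfold angle. rewrite S_INR. simpl. unfold Rdiv. ring. Qed.

Lemma angle_0_r N j : angle N j 0 = 0.
Proof. unfold angle. simpl. unfold Rdiv. ring. Qed.

Lemma angle_period N j q : (0 < N)%nat -> angle N j (N * q) = 2 * INR (j * q) * PI.
Proof. intros HN. unfold angle. rewrite !mult_INR. field. apply not_0_INR. lia. Qed.

(* Phase differences, written as a phase of a natural frequency. *)
Lemma angle_sub N j k l : (0 < N)%nat -> (l <= N)%nat ->
  angle N j (k + (N - l)) = angle N j k - angle N j l + 2 * INR j * PI.
Proof.
  intros HN Hl. unfold angle. rewrite plus_INR, minus_INR by exact Hl.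
  field. apply not_0_INR. lia.
Qed.

Lemma trig_progression_sums n p :
  2 * sin (p / 2) * rsum n (fun j => cos (INR j * p)) = sin (INR n * p - p / 2) + sin (p / 2)
  /\ 2 * sin (p / 2) * rsum n (fun j => sin (INR j * p)) = cos (p / 2) - cos (INR n * p - p / 2).
Proof.
  induction n as [|n [IHc IHs]].
  - simpl. rewrite Rmult_0_l, Rminus_0_l, sin_neg, cos_neg. split; ring.
  - rewrite !rsum_S, !Rmult_plus_distr_l, IHc, IHs, S_INR.
    replace ((INR n + 1) * p - p / 2) with (INR n * p + p / 2) by field.
    rewrite sin_plus, cos_plus, sin_minus, cos_minus. split; ring.
Qed.

Lemma sin_half_angle_neq0 N m : (0 < N)%nat -> (m mod N <> 0)%nat ->
  sin (PI * INR m / INR N) <> 0.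
Proof.
  intros HN Hm Hs. apply sin_eq_0_0 in Hs. destruct Hs as [q Hq].
  assert (HNr : INR N <> 0) by (apply not_0_INR; lia).
  assert (Hmq : INR m = IZR q * INR N).
  { apply (Rmult_eq_reg_l PI); [|apply PI_neq0].
    replace (PI * INR m) with (PI * INR m / INR N * INR N) by (field; exact HNr).
    rewrite Hq. ring. }
  rewrite !INR_IZR_INZ, <- mult_IZR in Hmq. apply eq_IZR in Hmq.
  assert (m = Z.to_nat q * N)%nat by lia. subst m.
  rewrite Nat.Div0.mod_mul in Hm. lia.
Qed.

Lemma character_sums N m : (0 < N)%nat ->
  rsum N (fun j => cos (angle N j m)) = (if Nat.eqb (m mod N) 0 then INR N else 0)
  /\ rsum N (fun j => sin (angle N j m)) = 0.
Proof.
  intros HN. assert (HNr : INR N <> 0) by (apply not_0_INR; lia).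
  destruct (Nat.eqb_spec (m mod N) 0) as [Hm|Hm].
  - rewrite (Nat.Div0.div_mod m N), Hm, Nat.add_0_r.
    rewrite (rsum_ext _ (fun j => cos _) (fun _ => 1)),
            (rsum_ext _ (fun j => sin _) (fun _ => 0)), !rsum_const; [split; ring| |];
      intros j _; rewrite angle_period, <- (Rplus_0_l (2 * _ * PI)) by exact HN;
      [rewrite sin_period; apply sin_0 | rewrite cos_period; apply cos_0].
  - set (p := 2 * PI * INR m / INR N).
    assert (Hs : sin (p / 2) <> 0).
    { replace (p / 2) with (PI * INR m / INR N) by (unfold p; field; exact HNr).
      now apply sin_half_angle_neq0. }
    destruct (trig_progression_sums N p) as [Hc Hsn].
    replace (INR N * p - p / 2) with (- (p / 2) + 2 * INR m * PI) in Hc, Hsn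
      by (unfold p; field; exact HNr).
    rewrite sin_period, sin_neg in Hc. rewrite cos_period, cos_neg in Hsn.
    rewrite (rsum_ext _ (fun j => cos _) (fun j => cos (INR j * p))),
            (rsum_ext _ (fun j => sin _) (fun j => sin (INR j * p)))
      by (intros; unfold angle, p; f_equal; field; exact HNr).
    split; apply (Rmult_eq_reg_l (2 * sin (p / 2))); lra.
Qed.

Lemma mod_eq0_below_2N n N : (0 < N)%nat -> (n < 2 * N)%nat ->
  (n mod N = 0)%nat <-> n = 0%nat \/ n = N.
Proof.
  intros HN Hn. destruct (Nat.ltb_spec n N).
  - rewrite Nat.mod_small by exact H. lia.
  - replace n with ((n - N) + 1 * N)%nat at 1 by lia.
    rewrite Nat.Div0.mod_add, Nat.mod_small by lia. lia.
Qed.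

Lemma reflect_index_0 N : ((N - 0) mod N = 0)%nat.
Proof. rewrite Nat.sub_0_r. apply Nat.Div0.mod_same. Qed.

Lemma reflect_index N k : (0 < k < N)%nat -> ((N - k) mod N = N - k)%nat.
Proof. intros Hk. apply Nat.mod_small. lia. Qed.

Lemma sum_mod_eq0 N k l : (k < N)%nat -> (l < N)%nat ->
  Nat.eqb ((k + l) mod N) 0 = Nat.eqb l ((N - k) mod N).
Proof.
  intros Hk Hl. destruct (Nat.eq_dec k 0) as [->|Hk0].
  - rewrite reflect_index_0. simpl. rewrite Nat.mod_small by exact Hl. reflexivity.
  - rewrite reflect_index by lia.
    destruct (Nat.eqb_spec ((k + l) mod N) 0) as [H|H];
      rewrite mod_eq0_below_2N in H by lia; symmetry;
        [apply Nat.eqb_eq | apply Nat.eqb_neq]; lia.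
Qed.

Lemma mode_product_sum N a b k l : (0 < N)%nat -> (k < N)%nat -> (l < N)%nat ->
  rsum N (fun j => mode N a b j k * mode N a b j l) =
  INR N / 2 * ((if Nat.eqb k l then a k * a l + b k * b l else 0)
               + (if Nat.eqb ((k + l) mod N) 0 then a k * a l - b k * b l else 0)).
Proof.
  intros HN Hk Hl.
  rewrite (rsum_ext _ _ (fun j =>
      (a k * a l + b k * b l) / 2 * cos (angle N j (k + (N - l)))
    + (a k * a l - b k * b l) / 2 * cos (angle N j (k + l))
    + (- (a k * b l + b k * a l)) / 2 * sin (angle N j (k + l))
    + (a k * b l - b k * a l) / 2 * sin (angle N j (k + (N - l))))).
  - rewrite !rsum_plus, !rsum_scal.
    destruct (character_sums N (k + (N - l)) HN) as [Hc1 Hs1].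
    destruct (character_sums N (k + l) HN) as [Hc2 Hs2].
    rewrite Hc1, Hs1, Hc2, Hs2.
    assert (Hdiag : Nat.eqb ((k + (N - l)) mod N) 0 = Nat.eqb k l).
    { destruct (Nat.eqb_spec ((k + (N - l)) mod N) 0) as [H|H];
        rewrite mod_eq0_below_2N in H by lia; symmetry;
        [apply Nat.eqb_eq | apply Nat.eqb_neq]; lia. }
    rewrite Hdiag. destruct (Nat.eqb k l), (Nat.eqb ((k + l) mod N) 0); field.
  - intros j _. unfold mode.
    rewrite angle_sub, cos_period, sin_period, angle_add by lia.
    rewrite cos_plus, cos_minus, sin_plus, sin_minus. field.
Qed.

Lemma parseval N a b : (0 < N)%nat -> in_hatR N a b ->
  rsum N (fun j => xfour N a b j ^ 2) = INR N * rsum N (fun k => a k ^ 2 + b k ^ 2).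
Proof.
  intros HN Hh.
  rewrite (rsum_ext _ _ (fun j => rsum N (fun k => rsum N (fun l =>
             mode N a b j k * mode N a b j l))))
    by (intros; rewrite xfour_modes, <- rsum_mul; ring).
  rewrite rsum_swap, <- rsum_scal. apply rsum_ext. intros k Hk.
  rewrite rsum_swap.
  rewrite (rsum_ext _ _ (fun l => INR N / 2 *
      ((if Nat.eqb l k then a k * a l + b k * b l else 0)
       + (if Nat.eqb l ((N - k) mod N) then a k * a l - b k * b l else 0)))).
  - rewrite rsum_scal, rsum_plus, !rsum_pick by (try apply Nat.mod_upper_bound; lia).
    destruct (Hh k Hk) as [Ha Hb]. rewrite <- Ha, Hb. field.
  - intros l Hl. rewrite mode_product_sum, sum_mod_eq0, (Nat.eqb_sym k l) by lia.
    reflexivity.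
Qed.

Lemma xfour_mean N a b : (0 < N)%nat -> rsum N (fun j => xfour N a b j) = INR N * a O.
Proof.
  intros HN. rewrite (rsum_ext _ _ (fun j => rsum N (mode N a b j))) by reflexivity.
  rewrite rsum_swap.
  rewrite (rsum_ext _ _ (fun k => if Nat.eqb k 0 then INR N * a k else 0)).
  - apply rsum_pick. exact HN.
  - intros k Hk. unfold mode. rewrite rsum_minus, !rsum_scal.
    destruct (character_sums N k HN) as [Hc Hs]. rewrite Hc, Hs, Nat.mod_small by exact Hk.
    destruct (Nat.eqb k 0); ring.
Qed.

Lemma cmod_sq x y : cmod x y ^ 2 = x ^ 2 + y ^ 2.
Proof. unfold cmod. apply pow2_sqrt. nra. Qed.

Lemma cmod_nonneg x y : 0 <= cmod x y.
Proof. apply sqrt_pos. Qed.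

Lemma hatR_im0 N a b : (0 < N)%nat -> in_hatR N a b -> b O = 0.
Proof.
  intros HN Hh. destruct (Hh O HN) as [_ Hb]. rewrite reflect_index_0 in Hb. lra.
Qed.

(* The real part with the zero mode removed: its transform is the fluctuation
   [y = x - z_0]. *)
Definition drop_mean (a : nat -> R) (k : nat) : R := if Nat.eqb k 0 then 0 else a k.

Lemma hatR_drop_mean N a b : (0 < N)%nat -> in_hatR N a b -> in_hatR N (drop_mean a) b.
Proof.
  intros HN Hh k Hk. destruct (Hh k Hk) as [Ha Hb]. split; [|exact Hb].
  unfold drop_mean. destruct (Nat.eqb_spec k 0) as [->|Hk0].
  - rewrite reflect_index_0. reflexivity.
  - rewrite reflect_index in * by lia.
    destruct (Nat.eqb_spec (N - k) 0); [lia|exact Ha].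
Qed.

Lemma xfour_drop_mean N a b j :
  (0 < N)%nat -> xfour N a b j = a O + xfour N (drop_mean a) b j.
Proof.
  intros HN. rewrite !xfour_modes.
  rewrite (rsum_ext _ _ (fun k => (if Nat.eqb k 0 then a O else 0) + mode N (drop_mean a) b j k)).
  - rewrite rsum_plus, rsum_pick by exact HN. reflexivity.
  - intros k _. unfold mode, drop_mean. destruct (Nat.eqb_spec k 0) as [->|]; [|ring].
    rewrite angle_0_r, cos_0, sin_0. ring.
Qed.

Lemma xfour_succ_mod N a b i : (0 < N)%nat -> (i < N)%nat ->
  xfour N a b ((i + 1) mod N) = xfour N a b (S i).
Proof.
  intros HN Hi. destruct (Nat.eq_dec (S i) N) as [HiN|HiN].
  - replace (i + 1)%nat with N by lia. rewrite Nat.Div0.mod_same, HiN, !xfour_modes.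
    apply rsum_ext. intros k _. unfold mode.
    replace (angle N N k) with (angle N 0 k + 2 * INR k * PI)
      by (unfold angle; simpl; field; apply not_0_INR; lia).
    rewrite cos_period, sin_period. reflexivity.
  - rewrite Nat.mod_small by lia. f_equal. lia.
Qed.

(* Fourier coefficients of the discrete gradient [x_j - x_{j+1}]: multiplication
   of [z_k] by [1 - omega^k]. *)
Definition grad_re N (a b : nat -> R) k :=
  a k * (1 - cos (angle N 1 k)) + b k * sin (angle N 1 k).
Definition grad_im N (a b : nat -> R) k :=
  b k * (1 - cos (angle N 1 k)) - a k * sin (angle N 1 k).

Lemma xfour_grad N a b j :
  xfour N a b j - xfour N a b (S j) = xfour N (grad_re N a b) (grad_im N a b) j.
Proof.
  rewrite !xfour_modes, <- rsum_minus. apply rsum_ext. intros k _.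
  unfold mode, grad_re, grad_im. rewrite angle_succ, cos_plus, sin_plus. ring.
Qed.

Lemma hatR_grad N a b : (0 < N)%nat -> in_hatR N a b ->
  in_hatR N (grad_re N a b) (grad_im N a b).
Proof.
  intros HN Hh k Hk. destruct (Hh k Hk) as [Ha Hb].
  assert (Hrefl : cos (angle N 1 ((N - k) mod N)) = cos (angle N 1 k)
                  /\ sin (angle N 1 ((N - k) mod N)) = - sin (angle N 1 k)).
  { destruct (Nat.eq_dec k 0) as [->|Hk0].
    - rewrite reflect_index_0, angle_0_r, sin_0. split; ring.
    - rewrite reflect_index by lia.
      replace (angle N 1 (N - k)) with (2 * PI - angle N 1 k)
        by (unfold angle; rewrite minus_INR by lia; simpl; field; apply not_0_INR; lia).
      rewrite cos_minus, sin_minus, cos_2PI, sin_2PI. split; ring. }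
  destruct Hrefl as [Hc Hs]. unfold grad_re, grad_im.
  rewrite Hc, Hs, <- Ha, Hb. split; ring.
Qed.

Lemma grad_modulus N a b k : (0 < N)%nat ->
  grad_re N a b k ^ 2 + grad_im N a b k ^ 2
  = (a k ^ 2 + b k ^ 2) * (4 * sin (INR k * PI / INR N) ^ 2).
Proof.
  intros HN.
  assert (Hhalf : angle N 1 k = 2 * (INR k * PI / INR N))
    by (unfold angle; simpl; field; apply not_0_INR; lia).
  assert (Hpyth := sin2_cos2 (angle N 1 k)). unfold Rsqr in Hpyth.
  assert (Hcos := cos_2a_sin (INR k * PI / INR N)). rewrite <- Hhalf in Hcos.
  unfold grad_re, grad_im.
  set (c := cos (angle N 1 k)) in *. set (s := sin (angle N 1 k)) in *.
  replace (4 * sin (INR k * PI / INR N) ^ 2) with (2 * (1 - c)) by (rewrite Hcos; ring).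
  nra.
Qed.

Section ErrorIdentity.

Variables (N : nat) (a b : nat -> R).
Hypothesis HN : (0 < N)%nat.
Hypothesis Hh : in_hatR N a b.

Let Q : R := rsum N (fun k => drop_mean a k ^ 2 + b k ^ 2).

(* On-site part of the energy: expansion of the double well around [z_0],
   using [sum_j y_j = 0] and Parseval for the quadratic term. *)
Lemma onsite_sum :
  rsum N (fun i => / 4 * xfour N a b i ^ 4 - / 2 * xfour N a b i ^ 2)
  = INR N * (/ 4 * a O ^ 4 - / 2 * a O ^ 2) + (3 / 2 * a O ^ 2 - / 2) * (INR N * Q)
    + rsum N (fun j => a O * xfour N (drop_mean a) b j ^ 3
                       + / 4 * xfour N (drop_mean a) b j ^ 4).
Proof.
  set (y := xfour N (drop_mean a) b). set (A := a O).
  assert (Hmean : rsum N y = 0).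
  { unfold y. rewrite xfour_mean by exact HN. unfold drop_mean. simpl. ring. }
  assert (Hsq : rsum N (fun j => y j ^ 2) = INR N * Q).
  { apply parseval; [exact HN | now apply hatR_drop_mean]. }
  rewrite (rsum_ext _ _ (fun i => (/ 4 * A ^ 4 - / 2 * A ^ 2) + (A ^ 3 - A) * y i
      + (3 / 2 * A ^ 2 - / 2) * y i ^ 2 + (A * y i ^ 3 + / 4 * y i ^ 4))).
  - rewrite !rsum_plus, !rsum_scal, rsum_const, Hmean, Hsq. ring.
  - intros i _. unfold y, A. rewrite (xfour_drop_mean N a b i HN). field.
Qed.

(* Interaction part: Parseval applied to the discrete gradient. *)
Lemma gradient_sum :
  rsum N (fun i => (xfour N a b i - xfour N a b ((i + 1) mod N)) ^ 2)
  = INR N * (4 * rsum N (fun k => (drop_mean a k ^ 2 + b k ^ 2)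
                                  * sin (INR k * PI / INR N) ^ 2)).
Proof.
  rewrite (rsum_ext _ _ (fun i => xfour N (grad_re N (drop_mean a) b)
                                         (grad_im N (drop_mean a) b) i ^ 2)).
  - rewrite parseval by (auto; apply hatR_grad, hatR_drop_mean; auto).
    f_equal. rewrite <- rsum_scal. apply rsum_ext. intros k _.
    rewrite grad_modulus by exact HN. ring.
  - intros i Hi. rewrite xfour_succ_mod, !(xfour_drop_mean N a b) by auto.
    rewrite <- xfour_grad. f_equal. ring.
Qed.

Lemma error_identity g :
  Gtilde N g a b - (- / 2 * a O ^ 2 + / 4 * a O ^ 4
               + / 2 * rsum N (fun k => if Nat.eqb k 0 then 0
                     else lambda g k N * cmod (a k) (b k) ^ 2)
               + 3 / 2 * a O ^ 2 * rsum N (fun k => if Nat.eqb k 0 then 0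
                     else cmod (a k) (b k) ^ 2))
  = / INR N * rsum N (fun j => a O * xfour N (drop_mean a) b j ^ 3
                               + / 4 * xfour N (drop_mean a) b j ^ 4).
Proof.
  assert (HNr : INR N <> 0) by (apply not_0_INR; lia).
  assert (Hb0 := hatR_im0 N a b HN Hh).
  set (Ss := rsum N (fun k => (drop_mean a k ^ 2 + b k ^ 2) * sin (INR k * PI / INR N) ^ 2)).
  assert (Hnorm : rsum N (fun k => if Nat.eqb k 0 then 0 else cmod (a k) (b k) ^ 2) = Q).
  { apply rsum_ext. intros k _. unfold drop_mean. rewrite cmod_sq.
    destruct (Nat.eqb_spec k 0) as [->|]; [rewrite Hb0; ring|reflexivity]. }
  assert (Hhess : rsum N (fun k => if Nat.eqb k 0 then 0
                        else lambda g k N * cmod (a k) (b k) ^ 2) = - Q + 2 * g * Ss).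
  { rewrite (rsum_ext _ _ (fun k => (-1) * (drop_mean a k ^ 2 + b k ^ 2)
         + (2 * g) * ((drop_mean a k ^ 2 + b k ^ 2) * sin (INR k * PI / INR N) ^ 2))).
    - rewrite rsum_plus, !rsum_scal. unfold Q, Ss. ring.
    - intros k _. unfold drop_mean, lambda. rewrite cmod_sq.
      destruct (Nat.eqb_spec k 0) as [->|]; [rewrite Hb0|]; ring. }
  unfold Gtilde, G_N, F_N. rewrite onsite_sum, gradient_sum, Hnorm, Hhess.
  unfold Ss. field. exact HNr.
Qed.

End ErrorIdentity.

Definition circ_dist (N k : nat) : nat := Nat.min k (N - k).

(* A crude Jordan-type inequality, from the Taylor lower bound for [sin]. *)
Lemma sin_ge_third u : 0 <= u <= 2 -> u / 3 <= sin u.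
Proof.
  intros Hu. assert (HPI := PI2_3_2).
  destruct (SIN u ltac:(lra) ltac:(lra)) as [Hlb _].
  unfold sin_lb, sin_approx, sin_term in Hlb. simpl in Hlb.
  assert (0 <= u ^ 5 * (42 - u ^ 2)) by (apply Rmult_le_pos; [apply pow_le|]; nra).
  nra.
Qed.

Lemma sin_multiple_bounds N d : (1 <= d)%nat -> (2 * d <= N)%nat ->
  sin (PI / INR N) <= sin (INR d * PI / INR N)
  /\ INR d * sin (PI / INR N) <= 3 * sin (INR d * PI / INR N).
Proof.
  intros Hd1 Hd2.
  assert (HNr : 0 < INR N) by (apply lt_0_INR; lia).
  assert (Hdr1 : 1 <= INR d) by (apply (le_INR 1); exact Hd1).
  assert (Hdr2 : 2 * INR d <= INR N) by (rewrite <- (mult_INR 2); apply le_INR; exact Hd2).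
  assert (HP := PI_RGT_0). assert (HP4 := PI_4).
  set (v := PI / INR N). set (u := INR d * PI / INR N).
  assert (Huv : u = INR d * v) by (unfold u, v; field; lra).
  assert (Hv : 0 < v) by (unfold v; apply Rdiv_lt_0_compat; lra).
  assert (Hu2 : u <= PI / 2).
  { unfold u. apply (Rmult_le_reg_r (2 * INR N)); [lra|].
    replace (INR d * PI / INR N * (2 * INR N)) with (2 * INR d * PI) by (field; lra).
    replace (PI / 2 * (2 * INR N)) with (INR N * PI) by field. nra. }
  assert (Hsv : sin v < v) by (apply sin_lt_x; exact Hv).
  assert (Hthird : u / 3 <= sin u) by (apply sin_ge_third; nra).
  split.
  - apply sin_incr_1; nra.
  - nra.
Qed.

Lemma lambda_lower_bound mu N k : 1 < mu -> (3 <= N)%nat -> (1 <= k <= N - 1)%nat ->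
  (mu - 1) / 9 * INR (circ_dist N k) ^ 2 <= lambda (mu * gamma1 N) k N.
Proof.
  intros Hmu HN Hk. set (d := circ_dist N k).
  assert (HNr : 0 < INR N) by (apply lt_0_INR; lia).
  assert (Hsym : sin (INR k * PI / INR N) = sin (INR d * PI / INR N)).
  { unfold d, circ_dist. destruct (Nat.min_spec k (N - k)) as [[_ ->]|[_ ->]]; [reflexivity|].
    rewrite minus_INR by lia.
    replace ((INR N - INR k) * PI / INR N) with (PI - INR k * PI / INR N) by (field; lra).
    rewrite sin_PI_x. reflexivity. }
  destruct (sin_multiple_bounds N d) as [Hmono Hlin]; [unfold d, circ_dist; lia..|].
  assert (Hdr : 0 <= INR d) by apply pos_INR.
  set (sv := sin (PI / INR N)) in *. set (su := sin (INR d * PI / INR N)) in *.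
  assert (Hsv : 0 < sv).
  { apply sin_gt_0; [apply Rdiv_lt_0_compat; [apply PI_RGT_0|lra]|].
    assert (HP := PI_RGT_0). assert (1 < INR N) by (apply (lt_INR 1); lia).
    apply (Rmult_lt_reg_r (INR N)); [lra|]. unfold Rdiv. rewrite Rmult_assoc, Rinv_l; nra. }
  unfold lambda, gamma1. rewrite Hsym. fold sv su.
  apply (Rmult_le_reg_r (sv ^ 2)); [nra|].
  replace ((-1 + 2 * (mu * / (2 * sv ^ 2)) * su ^ 2) * sv ^ 2) with (mu * su ^ 2 - sv ^ 2)
    by (field; lra).
  assert (Hdsv : 0 <= INR d * sv) by (apply Rmult_le_pos; lra).
  assert (Hsq : INR d ^ 2 * sv ^ 2 <= 9 * su ^ 2).
  { assert (0 <= (3 * su - INR d * sv) * (3 * su + INR d * sv)) by (apply Rmult_le_pos; lra).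
    nra. }
  assert (sv ^ 2 <= su ^ 2) by (apply pow_incr; lra).
  nra.
Qed.

Lemma Rpower_pow_base n x : Rpower (2 ^ n) x = Rpower 2 x ^ n.
Proof.
  rewrite <- (Rpower_pow n 2), Rpower_mult by lra.
  rewrite <- (Rpower_pow n (Rpower 2 x)), Rpower_mult by apply exp_pos.
  f_equal. ring.
Qed.

Lemma mode_block_bound mu alpha N k delta m x :
  1 < mu -> 0 < alpha -> (3 <= N)%nat -> (1 <= k <= N - 1)%nat -> 0 < delta ->
  (2 ^ m <= circ_dist N k < 2 ^ S m)%nat ->
  x <= delta * r_kN alpha k N / sqrt (lambda (mu * gamma1 N) k N) ->
  x <= 12 / sqrt (mu - 1) * delta * Rpower 2 alpha ^ S m / 2 ^ m.
Proof.
  intros Hmu Hal HN Hk Hd Hm Hx. set (d := circ_dist N k) in *.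
  assert (Hdm : 2 ^ m <= INR d) by (rewrite <- (pow_INR 2); apply le_INR; lia).
  assert (HdSm : INR d < 2 ^ S m) by (rewrite <- (pow_INR 2); apply lt_INR; lia).
  assert (H2m : 0 < 2 ^ m) by (apply pow_lt; lra).
  assert (Hs : 0 < sqrt (mu - 1)) by (apply sqrt_lt_R0; lra).
  assert (HP : 0 < Rpower 2 alpha ^ S m) by (apply pow_lt, exp_pos).
  assert (Hgap : sqrt (mu - 1) * INR d / 3 <= sqrt (lambda (mu * gamma1 N) k N)).
  { assert (HL := lambda_lower_bound mu N k Hmu HN Hk).
    rewrite <- (sqrt_pow2 (sqrt (mu - 1) * INR d / 3)) by (apply Rmult_le_pos; nra).
    apply sqrt_le_1_alt.
    replace ((sqrt (mu - 1) * INR d / 3) ^ 2) with (sqrt (mu - 1) ^ 2 * INR d ^ 2 / 9)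
      by field.
    rewrite pow2_sqrt by lra. fold d in HL. lra. }
  assert (Hweight : r_kN alpha k N <= 4 * Rpower 2 alpha ^ S m).
  { unfold r_kN, rho_k. fold (circ_dist N k) d. rewrite <- Rpower_pow_base.
    apply Rmult_le_compat_l; [lra|]. apply Rle_Rpower_l; lra. }
  assert (Hr0 : 0 <= r_kN alpha k N) by (left; apply Rmult_lt_0_compat; [lra|apply exp_pos]).
  eapply Rle_trans; [exact Hx|].
  apply Rle_trans with (delta * (4 * Rpower 2 alpha ^ S m) / (sqrt (mu - 1) * INR d / 3)).
  - unfold Rdiv. apply Rmult_le_compat; [nra|left; apply Rinv_0_lt_compat; nra|nra|].
    apply Rinv_le_contravar; nra.
  - replace (delta * (4 * Rpower 2 alpha ^ S m) / (sqrt (mu - 1) * INR d / 3))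
      with (12 / sqrt (mu - 1) * delta * Rpower 2 alpha ^ S m / INR d) by (field; lra).
    unfold Rdiv. apply Rmult_le_compat_l; [|apply Rinv_le_contravar; lra].
    apply Rmult_le_pos; [|lra]. apply Rmult_le_pos; [|lra].
    left. apply Rmult_lt_0_compat; [lra|apply Rinv_0_lt_compat; exact Hs].
Qed.

(* Dyadic decomposition of the fluctuating modes according to
   [2^m <= circ_dist N k < 2^(m+1)]. *)
Definition in_block (N m k : nat) : bool :=
  andb (negb (Nat.eqb k 0)) (Nat.eqb (Nat.log2 (circ_dist N k)) m).

Definition block_part (N : nat) (a : nat -> R) (m k : nat) : R :=
  if in_block N m k then a k else 0.

Lemma in_block_spec N m k : (k < N)%nat -> in_block N m k = true ->
  (1 <= k <= N - 1)%nat /\ (2 ^ m <= circ_dist N k < 2 ^ S m)%nat.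
Proof.
  unfold in_block. intros Hk Hblk. apply andb_prop in Hblk. destruct Hblk as [Hk0 Hm].
  apply Bool.negb_true_iff, Nat.eqb_neq in Hk0. apply Nat.eqb_eq in Hm.
  split; [lia|]. subst m. apply Nat.log2_spec. unfold circ_dist. lia.
Qed.

(* Blocks are invariant under conjugation [k -> N - k], so each block of a
   Hermitian vector is Hermitian. *)
Lemma in_block_reflect N m k : (0 < N)%nat -> (k < N)%nat ->
  in_block N m ((N - k) mod N) = in_block N m k.
Proof.
  intros HN Hk. destruct (Nat.eq_dec k 0) as [->|Hk0]; [now rewrite reflect_index_0|].
  rewrite reflect_index by lia. unfold in_block, circ_dist.
  replace (Nat.min (N - k) (N - (N - k))) with (Nat.min k (N - k)) by lia.
  destruct (Nat.eqb_spec (N - k) 0), (Nat.eqb_spec k 0); [lia..|reflexivity].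
Qed.

Lemma hatR_block N a b m : (0 < N)%nat -> in_hatR N a b ->
  in_hatR N (block_part N a m) (block_part N b m).
Proof.
  intros HN Hh k Hk. destruct (Hh k Hk) as [Ha Hb]. unfold block_part.
  rewrite in_block_reflect by assumption.
  destruct (in_block N m k); split; [exact Ha|exact Hb|ring|ring].
Qed.

Lemma block_partition N k c : (k < N)%nat ->
  rsum N (fun m => if in_block N m k then c else 0) = if Nat.eqb k 0 then 0 else c.
Proof.
  intros Hk. unfold in_block. destruct (Nat.eqb_spec k 0) as [->|Hk0].
  - simpl. rewrite rsum_const. ring.
  - simpl. rewrite (rsum_ext _ _ (fun m => if Nat.eqb m (Nat.log2 (circ_dist N k)) then c else 0))
      by (intros m _; rewrite Nat.eqb_sym; reflexivity).
    apply rsum_pick. assert (Hlog := Nat.log2_le_lin (circ_dist N k)).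
    unfold circ_dist in *. lia.
Qed.

Lemma dyadic_decomposition N a b j :
  xfour N (drop_mean a) b j = rsum N (fun m => xfour N (block_part N a m) (block_part N b m) j).
Proof.
  rewrite xfour_modes.
  transitivity (rsum N (fun k => rsum N (fun m =>
                  if in_block N m k then mode N a b j k else 0))).
  - apply rsum_ext. intros k Hk. rewrite block_partition by exact Hk.
    unfold mode, drop_mean. destruct (Nat.eqb_spec k 0) as [->|]; [|reflexivity].
    rewrite angle_0_r, sin_0. ring.
  - rewrite rsum_swap. apply rsum_ext. intros m _. rewrite xfour_modes.
    apply rsum_ext. intros k _. unfold mode, block_part. destruct (in_block N m k); ring.
Qed.

Lemma block_card N m : rsum N (fun k => if in_block N m k then 1 else 0) <= 2 * 2 ^ m.
Proof.
  set (p := (2 ^ m)%nat).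
  apply Rle_trans with (rsum N (fun k =>
      (if andb (Nat.leb p k) (Nat.ltb k (2 * p)) then 1 else 0)
    + (if andb (Nat.leb (N + 1 - 2 * p) k) (Nat.ltb k (N + 1 - p)) then 1 else 0))).
  - apply rsum_le. intros k Hk. destruct (in_block N m k) eqn:Hblk.
    + apply in_block_spec in Hblk; [|exact Hk]. destruct Hblk as [_ Hd].
      unfold circ_dist in Hd. rewrite Nat.pow_succ_r' in Hd. fold p in Hd.
      destruct (Nat.leb_spec p k), (Nat.ltb_spec k (2 * p)),
        (Nat.leb_spec (N + 1 - 2 * p) k), (Nat.ltb_spec k (N + 1 - p)); simpl; lra || lia.
    + destruct (andb _ _), (andb _ _); lra.
  - rewrite rsum_plus.
    assert (H1 := rsum_count_interval N p (2 * p) ltac:(lia)).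
    assert (H2 := rsum_count_interval N (N + 1 - 2 * p) (N + 1 - p) ltac:(lia)).
    replace (2 * p - p)%nat with p in H1 by lia.
    assert (INR (N + 1 - p - (N + 1 - 2 * p)) <= INR p) by (apply le_INR; lia).
    assert (INR p = 2 ^ m) by (unfold p; rewrite pow_INR; reflexivity). lra.
Qed.

Lemma mode_abs N a b j k : Rabs (mode N a b j k) <= cmod (a k) (b k).
Proof.
  unfold mode, cmod. assert (Hpyth := sin2_cos2 (angle N j k)). unfold Rsqr in Hpyth.
  set (c := cos (angle N j k)) in *. set (s := sin (angle N j k)) in *.
  rewrite <- sqrt_Rsqr_abs. apply sqrt_le_1_alt. unfold Rsqr.
  assert (0 <= (a k * s + b k * c) ^ 2) by apply pow2_ge_0.
  replace (a k ^ 2 + b k ^ 2) with ((a k ^ 2 + b k ^ 2) * (s * s + c * c))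
    by (rewrite Hpyth; ring).
  nra.
Qed.

(* A block whose modes are bounded by [B] has sup norm at most [2^(m+1) B]
   (triangle inequality) and squared L^2 norm at most [N 2^(m+1) B^2] (Parseval). *)
Lemma block_estimates N a b m B : (0 < N)%nat -> in_hatR N a b -> 0 <= B ->
  (forall k, (k < N)%nat -> in_block N m k = true -> cmod (a k) (b k) <= B) ->
  (forall j, Rabs (xfour N (block_part N a m) (block_part N b m) j) <= 2 * 2 ^ m * B)
  /\ rsum N (fun j => xfour N (block_part N a m) (block_part N b m) j ^ 2)
     <= INR N * (2 * 2 ^ m * B ^ 2).
Proof.
  intros HN Hh HB Hz. assert (Hcard := block_card N m). split.
  - intros j. rewrite xfour_modes. eapply Rle_trans; [apply rsum_abs|].
    apply Rle_trans with (rsum N (fun k => B * (if in_block N m k then 1 else 0))).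
    + apply rsum_le. intros k Hk. eapply Rle_trans; [apply mode_abs|].
      unfold block_part. destruct (in_block N m k) eqn:Hblk.
      * rewrite Rmult_1_r. apply Hz; assumption.
      * unfold cmod. replace (0 ^ 2 + 0 ^ 2) with 0 by ring. rewrite sqrt_0. lra.
    + rewrite rsum_scal, Rmult_comm. apply Rmult_le_compat_r; assumption.
  - rewrite parseval by (auto; apply hatR_block; auto).
    apply Rmult_le_compat_l; [apply pos_INR|].
    apply Rle_trans with (rsum N (fun k => B ^ 2 * (if in_block N m k then 1 else 0))).
    + apply rsum_le. intros k Hk. unfold block_part. destruct (in_block N m k) eqn:Hblk.
      * rewrite Rmult_1_r, <- cmod_sq. assert (Hc := Hz k Hk Hblk).
        assert (Hc0 := cmod_nonneg (a k) (b k)). nra.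
      * lra.
    + rewrite rsum_scal.
      assert (B ^ 2 * rsum N (fun k => if in_block N m k then 1 else 0) <= B ^ 2 * (2 * 2 ^ m))
        by (apply Rmult_le_compat_l; [apply pow2_ge_0|exact Hcard]).
      lra.
Qed.

Lemma sum_fourth_le n (f : nat -> R) M : (forall j, (j < n)%nat -> Rabs (f j) <= M) ->
  rsum n (fun j => f j ^ 4) <= M ^ 2 * rsum n (fun j => f j ^ 2).
Proof.
  intros Hf. rewrite <- rsum_scal. apply rsum_le. intros j Hj.
  assert (f j ^ 2 <= M ^ 2).
  { rewrite <- (pow2_abs (f j)). apply pow_incr. split; [apply Rabs_pos|exact (Hf j Hj)]. }
  replace (f j ^ 4) with (f j ^ 2 * f j ^ 2) by ring.
  apply Rmult_le_compat_r; [apply pow2_ge_0|assumption].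
Qed.

Lemma dyadic_scaling C delta P m :
  (2 * 2 ^ m * (C * delta * P ^ S m / 2 ^ m)) ^ 2 * (2 * 2 ^ m * (C * delta * P ^ S m / 2 ^ m) ^ 2)
  = 8 * C ^ 4 * P ^ 4 * delta ^ 4 * (P ^ 4 / 2) ^ m.
Proof.
  replace ((P ^ 4 / 2) ^ m) with ((P ^ m) ^ 4 / 2 ^ m).
  - assert (2 ^ m <> 0) by (apply pow_nonzero; lra). simpl pow. field. assumption.
  - unfold Rdiv. rewrite Rpow_mult_distr, pow_inv, <- !pow_mult, Nat.mul_comm. reflexivity.
Qed.

Lemma cube_above q : 0 <= q < 1 -> exists rho, 0 < rho < 1 /\ q < rho ^ 3.
Proof.
  intros Hq. set (e := (1 - q) / 4). assert (He : e = (1 - q) / 4) by reflexivity.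
  exists (1 - e). split; [lra|].
  assert (0 <= e ^ 2 * (3 - e)) by (apply Rmult_le_pos; [apply pow2_ge_0|lra]).
  replace ((1 - e) ^ 3) with (1 - 3 * e + e ^ 2 * (3 - e)) by ring. lra.
Qed.

Lemma sum_blocks_fourth n (Y : nat -> nat -> R) c q rho :
  0 < rho < 1 -> 0 <= q < rho ^ 3 -> 0 <= c ->
  (forall m, (m < n)%nat -> rsum n (fun j => Y m j ^ 4) <= c * q ^ m) ->
  rsum n (fun j => rsum n (fun m => Y m j) ^ 4)
  <= (/ (1 - rho)) ^ 3 * c * / (1 - q / rho ^ 3).
Proof.
  intros Hrho Hq Hc Hblocks. set (r := q / rho ^ 3).
  assert (Hrho3 : 0 < rho ^ 3) by (apply pow_lt; lra).
  assert (Hr : 0 <= r < 1).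
  { unfold r. split; [apply Rmult_le_pos; [lra|left; apply Rinv_0_lt_compat; lra]|].
    apply (Rmult_lt_reg_r (rho ^ 3)); [exact Hrho3|].
    unfold Rdiv. rewrite Rmult_assoc, Rinv_l; lra. }
  assert (Hw : 0 <= (/ (1 - rho)) ^ 3) by (apply pow_le; left; apply Rinv_0_lt_compat; lra).
  eapply Rle_trans; [apply rsum_le; intros j _; apply (holder_fourth_geometric n _ rho Hrho)|].
  rewrite rsum_scal, rsum_swap, Rmult_assoc. apply Rmult_le_compat_l; [exact Hw|].
  apply Rle_trans with (rsum n (fun m => c * r ^ m)).
  - apply rsum_le. intros m Hm. rewrite rsum_scal.
    replace (c * r ^ m) with ((/ rho ^ m) ^ 3 * (c * q ^ m)).
    + apply Rmult_le_compat_l; [|exact (Hblocks m Hm)].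
      apply pow_le. left. apply Rinv_0_lt_compat, pow_lt. lra.
    + unfold r, Rdiv. rewrite Rpow_mult_distr, !pow_inv, <- !pow_mult, Nat.mul_comm.
      field. apply pow_nonzero. lra.
  - rewrite rsum_scal. apply Rmult_le_compat_l; [exact Hc|]. now apply rsum_geom_le.
Qed.

Definition mode_constraint (mu alpha : R) (N : nat) (delta : R) (a b : nat -> R) : Prop :=
  forall k : nat, (1 <= k <= N - 1)%nat ->
    cmod (a k) (b k) <= delta * r_kN alpha k N / sqrt (lambda (mu * gamma1 N) k N).

Section FluctuationL4.

Variables mu alpha : R.
Hypothesis Hmu : 1 < mu.
Hypothesis Halpha : 0 < alpha < / 4.

Let P : R := Rpower 2 alpha.
Let C : R := 12 / sqrt (mu - 1).
(* Ratio of the L^4 bounds of consecutive blocks; [q < 1] exactly when [alpha < 1/4]. *)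
Let q : R := P ^ 4 / 2.

Lemma block_ratio_lt_1 : 0 < q < 1.
Proof.
  assert (HP4 : P ^ 4 < 2).
  { unfold P. rewrite <- Rpower_pow, Rpower_mult by apply exp_pos.
    rewrite <- (Rpower_1 2) at 2 by lra. apply Rpower_lt; simpl; lra. }
  assert (0 < P ^ 4) by (apply pow_lt, exp_pos). unfold q. lra.
Qed.

Lemma block_fourth_bound N delta a b m :
  (3 <= N)%nat -> 0 < delta -> in_hatR N a b -> mode_constraint mu alpha N delta a b ->
  rsum N (fun j => xfour N (block_part N a m) (block_part N b m) j ^ 4)
  <= INR N * (8 * C ^ 4 * P ^ 4 * delta ^ 4) * q ^ m.
Proof.
  intros HN Hd Hh Hz. set (B := C * delta * P ^ S m / 2 ^ m).
  assert (HP : 0 < P) by apply exp_pos.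
  assert (H2m : 0 < 2 ^ m) by (apply pow_lt; lra).
  assert (HC : 0 < C) by (apply Rdiv_lt_0_compat; [lra|apply sqrt_lt_R0; lra]).
  assert (HB : 0 <= B).
  { unfold B. apply Rmult_le_pos; [|left; apply Rinv_0_lt_compat; exact H2m].
    assert (0 < P ^ S m) by (apply pow_lt; exact HP).
    left. apply Rmult_lt_0_compat; [apply Rmult_lt_0_compat|]; assumption. }
  assert (Hblock : forall k, (k < N)%nat -> in_block N m k = true -> cmod (a k) (b k) <= B).
  { intros k Hk Hblk. destruct (in_block_spec N m k Hk Hblk) as [Hk1 Hdyadic].
    apply (mode_block_bound mu alpha N k delta m); try lra; auto. }
  destruct (block_estimates N a b m B ltac:(lia) Hh HB Hblock) as [Hsup Hl2].
  eapply Rle_trans; [apply (sum_fourth_le _ _ (2 * 2 ^ m * B)); intros; apply Hsup|].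
  eapply Rle_trans; [apply Rmult_le_compat_l; [apply pow2_ge_0|exact Hl2]|].
  right. unfold B, q.
  transitivity (INR N * (8 * C ^ 4 * P ^ 4 * delta ^ 4 * (P ^ 4 / 2) ^ m));
    [rewrite <- dyadic_scaling|]; ring.
Qed.

Lemma fluct_fourth_bound : exists K, 0 <= K /\
  forall N delta a b, (3 <= N)%nat -> 0 < delta -> in_hatR N a b ->
    mode_constraint mu alpha N delta a b ->
    rsum N (fun j => xfour N (drop_mean a) b j ^ 4) <= INR N * K * delta ^ 4.
Proof.
  destruct block_ratio_lt_1 as [Hq0 Hq1].
  destruct (cube_above q ltac:(lra)) as [rho [Hrho Hrho3]].
  set (K0 := 8 * C ^ 4 * P ^ 4).
  assert (HK0 : 0 <= K0).
  { unfold K0. assert (0 < C) by (apply Rdiv_lt_0_compat; [lra|apply sqrt_lt_R0; lra]).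
    assert (0 < P) by apply exp_pos.
    assert (0 < C ^ 4 * P ^ 4) by (apply Rmult_lt_0_compat; apply pow_lt; lra). lra. }
  assert (Hr : q / rho ^ 3 < 1).
  { apply (Rmult_lt_reg_r (rho ^ 3)); [lra|].
    unfold Rdiv. rewrite Rmult_assoc, Rinv_l; lra. }
  exists ((/ (1 - rho)) ^ 3 * K0 * / (1 - q / rho ^ 3)). split.
  { apply Rmult_le_pos; [apply Rmult_le_pos|left; apply Rinv_0_lt_compat; lra]; [|exact HK0].
    apply pow_le. left. apply Rinv_0_lt_compat. lra. }
  intros N delta a b HN Hd Hh Hz.
  rewrite (rsum_ext _ _ (fun j => (rsum N (fun m =>
             xfour N (block_part N a m) (block_part N b m) j)) ^ 4))
    by (intros; rewrite dyadic_decomposition; reflexivity).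
  eapply Rle_trans.
  - apply (sum_blocks_fourth N _ (INR N * K0 * delta ^ 4) q rho); [exact Hrho|lra| |].
    + apply Rmult_le_pos; [apply Rmult_le_pos; [apply pos_INR|exact HK0]|apply pow_le; lra].
    + intros m _. unfold K0.
      replace (INR N * (8 * C ^ 4 * P ^ 4) * delta ^ 4)
        with (INR N * (8 * C ^ 4 * P ^ 4 * delta ^ 4)) by ring.
      now apply block_fourth_bound.
  - right. ring.
Qed.

End FluctuationL4.

(* [|t|^3 <= t^4 / d + d^3]: split according to [|t| <= d] or [|t| > d]. *)
Lemma cube_le_quartic_plus t d : 0 < d -> Rabs t ^ 3 <= t ^ 4 / d + d ^ 3.
Proof.
  intros Hd. set (u := Rabs t). assert (Hu : 0 <= u) by apply Rabs_pos.
  replace (t ^ 4) with (u ^ 4)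
    by (unfold u; rewrite RPow_abs; apply Rabs_pos_eq;
        replace (t ^ 4) with ((t ^ 2) ^ 2) by ring; apply pow2_ge_0).
  assert (0 <= u ^ 4 / d) by (apply Rmult_le_pos; [apply pow_le|left; apply Rinv_0_lt_compat]; lra).
  assert (0 < d ^ 3) by (apply pow_lt; lra).
  destruct (Rle_lt_dec u d).
  - assert (u ^ 3 <= d ^ 3) by (apply pow_incr; lra). lra.
  - assert (u ^ 3 * d <= u ^ 4)
      by (replace (u ^ 4) with (u ^ 3 * u) by ring; apply Rmult_le_compat_l; [apply pow_le|]; lra).
    assert (u ^ 3 <= u ^ 4 / d)
      by (apply (Rmult_le_reg_r d); [exact Hd|]; unfold Rdiv; rewrite Rmult_assoc, Rinv_l; lra).
    lra.
Qed.

Lemma cubic_quartic_mean_bound n (y : nat -> R) A K delta :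
  (0 < n)%nat -> Rabs A <= 1 -> 0 <= K -> 0 < delta <= 1 ->
  rsum n (fun j => y j ^ 4) <= INR n * K * delta ^ 4 ->
  Rabs (/ INR n * rsum n (fun j => A * y j ^ 3 + / 4 * y j ^ 4)) <= (5 / 4 * K + 1) * delta ^ 3.
Proof.
  intros Hn HA HK Hd Hy4. assert (Hnr : 0 < INR n) by (apply lt_0_INR; exact Hn).
  assert (Hcoef : 0 < / delta + / 4) by (assert (0 < / delta) by (apply Rinv_0_lt_compat; lra); lra).
  assert (Hpt : forall j, Rabs (A * y j ^ 3 + / 4 * y j ^ 4) <= (/ delta + / 4) * y j ^ 4 + delta ^ 3).
  { intros j. eapply Rle_trans; [apply Rabs_triang|].
    rewrite !Rabs_mult, <- RPow_abs, (Rabs_pos_eq (/ 4)) by lra.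
    rewrite (Rabs_pos_eq (y j ^ 4)) by (replace (y j ^ 4) with ((y j ^ 2) ^ 2) by ring; apply pow2_ge_0).
    assert (Hc := cube_le_quartic_plus (y j) delta ltac:(lra)).
    assert (Rabs A * Rabs (y j) ^ 3 <= Rabs (y j) ^ 3)
      by (assert (0 <= Rabs (y j) ^ 3) by (apply pow_le, Rabs_pos); nra).
    unfold Rdiv in Hc. lra. }
  assert (Hsum : Rabs (rsum n (fun j => A * y j ^ 3 + / 4 * y j ^ 4))
                 <= (/ delta + / 4) * (INR n * K * delta ^ 4) + INR n * delta ^ 3).
  { eapply Rle_trans; [apply rsum_abs|]. eapply Rle_trans; [apply rsum_le; intros j _; apply Hpt|].
    rewrite rsum_plus, rsum_scal, rsum_const.
    apply Rplus_le_compat_r, Rmult_le_compat_l; [lra|exact Hy4]. }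
  rewrite Rabs_mult, Rabs_pos_eq by (left; apply Rinv_0_lt_compat; exact Hnr).
  apply Rle_trans with (/ INR n * ((/ delta + / 4) * (INR n * K * delta ^ 4) + INR n * delta ^ 3)).
  - apply Rmult_le_compat_l; [left; apply Rinv_0_lt_compat; exact Hnr|exact Hsum].
  - replace (/ INR n * ((/ delta + / 4) * (INR n * K * delta ^ 4) + INR n * delta ^ 3))
      with (K * delta ^ 3 + / 4 * (K * delta ^ 3) * delta + delta ^ 3) by (field; lra).
    assert (0 <= K * delta ^ 3) by (apply Rmult_le_pos; [exact HK|apply pow_le; lra]).
    nra.
Qed.

Theorem lemma4p8 (mu rho alpha : R) :
  1 < mu -> 0 < rho < 1 -> 0 < alpha < / 4 ->
  exists A5 delta0 : R, 0 < delta0 /\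
    forall (N : nat) (delta : R) (a b : nat -> R),
      (3 <= N)%nat ->
      0 < delta < delta0 ->
      in_hatR N a b ->
      -1 + rho < a O < 1 - rho ->
      (forall k : nat, (1 <= k <= N - 1)%nat ->
         cmod (a k) (b k) <=
           delta * r_kN alpha k N / sqrt (lambda (mu * gamma1 N) k N)) ->
      Rabs (Gtilde N (mu * gamma1 N) a b
            - (- / 2 * a O ^ 2 + / 4 * a O ^ 4
               + / 2 * rsum N (fun k => if Nat.eqb k 0 then 0
                     else lambda (mu * gamma1 N) k N * cmod (a k) (b k) ^ 2)
               + 3 / 2 * a O ^ 2 * rsum N (fun k => if Nat.eqb k 0 then 0
                     else cmod (a k) (b k) ^ 2)))
      <= A5 * delta ^ 3.
Proof.
  intros Hmu Hrho Halpha.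
  destruct (fluct_fourth_bound mu alpha Hmu Halpha) as [K [HK Hfourth]].
  exists (5 / 4 * K + 1), 1. split; [lra|].
  intros N delta a b HN Hdelta Hh Ha0 Hmodes.
  rewrite error_identity by (auto; lia).
  apply cubic_quartic_mean_bound; [lia|apply Rabs_le; lra|exact HK|lra|].
  apply Hfourth; [exact HN|lra|exact Hh|exact Hmodes].
Qed.
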